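(* Let $m,b\ge1$, let $\mathbf M$ be an invertible $\mathbb{F}_{2^m}$-linear map of $(\mathbb{F}_{2^m})^b$ (i.e. $\mathbf M\in\mathrm{GL}((\mathbb{F}_{2^m})^b)$) of order $t$, regard $V=(\mathbb{F}_{2^m})^b$ as $(\mathbb{F}_2)^{mb}$, and define $\alpha:V\to(\mathbb{F}_2)^{2^m bt}$ by $\alpha(v)=(\varepsilon(v),\varepsilon(\mathbf Mv),\dots,\varepsilon(\mathbf M^{t-1}v))$. Then $\dim_{\mathbb{F}_2}\langle\alpha(V)\rangle\le 2^m bt-(bt-1)-mb(t-1)$.
   Context: Identify $(\mathbb{F}_2)^m$ with $\mathbb{F}_{2^m}=\mathbb{F}_2[x]/(p)$ for a primitive polynomial $p$ of degree $m$, with primitive element $\gamma$ (a root of $p$). Let $e_1,\dots,e_{2^m}$ be the standard basis of $(\mathbb{F}_2)^{2^m}$ and define $\varepsilon':\mathbb{F}_{2^m}\to(\mathbb{F}_2)^{2^m}$ by $\varepsilon'(0)=e_1$, $\varepsilon'(\gamma^i)=e_{i+1}$ for $1\le i\le2^m-1$. For $v=(v_1,\dots,v_b)\in(\mathbb{F}_{2^m})^b$ set $\varepsilon(v)=(\varepsilon'(v_1),\dots,\varepsilon'(v_b))\in(\mathbb{F}_2)^{2^m b}$. $\langle S\rangle$ denotes the $\mathbb{F}_2$-linear span. *)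

From HB Require Import structures.
From mathcomp Require Import all_boot all_order all_algebra all_field.
Set Implicit Arguments. Unset Strict Implicit. Unset Printing Implicit Defensive.
Import GRing.Theory.
Local Open Scope ring_scope.

(* epsilon' : F -> (F_2)^(2^m), coordinates indexed 0..2^m-1 (0-based).
   eps'(0) = e_1 (index 0), eps'(gamma^i) = e_{i+1} (index i), 1 <= i <= 2^m-1. *)
Definition eps' (F : finFieldType) (m : nat) (gamma : F) (x : F)
  : 'rV['F_2]_(2 ^ m) :=
  \row_(j < 2 ^ m)
    (if j == 0%N :> nat then (x == 0) else (x == gamma ^+ j))%:R.

Definition eps (F : finFieldType) (m b : nat) (gamma : F) (v : 'cV[F]_b)
  : 'rV['F_2]_(b * 2 ^ m) :=
  mxvec (\matrix_(i < b) eps' m gamma (v i 0)).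

Definition alpha (F : finFieldType) (m b t : nat) (gamma : F) (M : 'M[F]_b)
  (v : 'cV[F]_b) : 'rV['F_2]_(t * (b * 2 ^ m)) :=
  mxvec (\matrix_(k < t) eps m gamma (M ^+ k *m v)).

From HB Require Import structures.
From mathcomp Require Import all_boot all_order all_algebra all_field zify.
Import GRing.Theory.
Local Open Scope ring_scope.
Set Implicit Arguments. Unset Strict Implicit.

(* Each block eps'(x) has exactly one nonzero entry, so its entries sum to 1,
   and the additive map decode r = \sum_(j != 0) r_j gamma^j (additive since
   char F = 2) recovers x from it.  Hence every alpha(v) satisfies linear
   relations: all the b t block parities are equal, and the decoded k-th block
   column is M^k times the decoded 0-th one.  These relations form an additive
   syndrome map V -> F_2^(bt-1) x F^(b(t-1)) vanishing on the span of alpha(V);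
   since it has a (non-linear) section, |<alpha(V)>| * 2^(bt-1) * 2^(mb(t-1))
   <= 2^(2^m bt). *)

Lemma morphD_mulrn (U : nmodType) (W : zmodType) (f : U -> W) :
  {morph f : x y / x + y} -> forall x n, f (x *+ n) = f x *+ n.
Proof.
move=> fD x; elim=> [|n IHn]; last by rewrite !mulrS fD IHn.
by apply: (addrI (f 0)); rewrite -fD !addr0.
Qed.

Lemma span_additive_eq0 (p : nat) (vT : vectType 'F_p) (X : zmodType)
    (f : vT -> X) (S : seq vT) :
  {morph f : x y / x + y} -> {in S, forall v, f v = 0} ->
  {in <<S>>%VS, forall u, f u = 0}.
Proof.
move=> fD fS u; rewrite -[S]/(tval (in_tuple S)) => /coord_span->.
have f0 : f 0 = 0 by rewrite -(mulr0n 0) morphD_mulrn.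
rewrite (big_morph f fD f0) big1 // => i _.
by rewrite -[coord _ _ _]natr_Zp scaler_nat morphD_mulrn // fS ?mul0rn ?mem_nth.
Qed.

Lemma leq_card_section (V : finZmodType) (X : finType) (A : {set V})
    (r : V -> X) (s : X -> V) :
  (forall u x, u \in A -> r (u + s x) = x) -> (#|A| * #|X| <= #|V|)%N.
Proof.
move=> rs; rewrite -cardsT -cardsX.
apply: (leq_card_in (fun p : V * X => p.1 + s p.2)).
move=> [u1 x1] [u2 x2]; rewrite !inE /= !andbT => Au1 Au2 E.
have Ex : x1 = x2 by rewrite -(rs u1 x1 Au1) E rs.
by rewrite -Ex in E *; rewrite (addIr _ E).
Qed.

Definition block (R : Type) (n b t : nat) (w : 'rV[R]_(t * (b * n)))
    (k : 'I_t) (i : 'I_b) : 'rV[R]_n :=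
  row i (vec_mx (row k (vec_mx w))).

Lemma block_mxvec (R : Type) (n b t : nat) (S : 'I_t -> 'I_b -> 'rV[R]_n) k i :
  block (mxvec (\matrix_(k < t) mxvec (\matrix_(i < b) S k i))) k i = S k i.
Proof. by rewrite /block !(mxvecK, rowK). Qed.

Lemma blockD (R : nmodType) (n b t : nat) (w1 w2 : 'rV[R]_(t * (b * n))) k i :
  block (w1 + w2) k i = block w1 k i + block w2 k i.
Proof. by apply/rowP => j; rewrite !mxE. Qed.

Lemma block_alpha (F : finFieldType) (m b t : nat) (gamma : F) (M : 'M[F]_b)
    v k i :
  block (alpha m t gamma M v) k i = eps' m gamma ((M ^+ k *m v) i 0).
Proof. exact: block_mxvec. Qed.

Section Parity.
Variable n : nat.
Implicit Types r : 'rV['F_2]_n.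

Definition parity r : 'F_2 := \sum_j r 0 j.

Lemma parityD r1 r2 : parity (r1 + r2) = parity r1 + parity r2.
Proof. by rewrite /parity -big_split; apply: eq_bigr => j _; rewrite mxE. Qed.

Lemma parity_delta (j : 'I_n) : parity (delta_mx 0 j) = 1.
Proof.
rewrite /parity (bigD1 j) //= big1 => [|k /negbTE jk].
  by rewrite mxE !eqxx addr0.
by rewrite mxE jk andbF.
Qed.

End Parity.

Section Decode.
Variables (n : nat) (R : nzRingType) (gamma : R).
Implicit Types r : 'rV['F_2]_n.

Definition decode r : R := \sum_(j < n | j != 0 :> nat) gamma ^+ j *+ r 0 j.

Lemma decodeD (charR2 : 2 \in [pchar R]) r1 r2 :
  decode (r1 + r2) = decode r1 + decode r2.
Proof.
rewrite /decode -big_split; apply: eq_bigr => j _.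
have addF2 (a c : 'F_2) : nat_of_ord (a + c) = ((a + c) %% 2)%N by [].
rewrite mxE addF2 /= -mulrnDr -mulr_natr.
by rewrite (GRing.natr_mod_pchar charR2) mulr_natr.
Qed.

Lemma decode_delta (j : 'I_n) :
  decode (delta_mx 0 j) = if j == 0 :> nat then 0 else gamma ^+ j.
Proof.
case: eqP => [j0|jn0].
  rewrite /decode big1 // => k kn0; rewrite mxE (_ : k == j = false) ?andbF //.
  by apply: contraNF kn0 => /eqP->; rewrite j0.
rewrite /decode (bigD1 j) /=; last exact/eqP.
by rewrite mxE !eqxx big1 ?addr0 // => k /andP[_ /negbTE]; rewrite mxE => ->.
Qed.

End Decode.

Section PrimitiveRoot.
Variables (F : finFieldType) (m : nat) (gamma : F).
Hypotheses (cardF : #|F| = (2 ^ m)%N) (prim : (2 ^ m).-1.-primitive_root gamma).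
Local Notation n := (2 ^ m).-1.

Lemma prim_expf_neq0 j : gamma ^+ j != 0.
Proof.
rewrite expf_neq0 //; apply: contra_eqN (prim_expr_order prim) => /eqP->.
by rewrite expr0n eqn0Ngt (prim_order_gt0 prim) eq_sym oner_eq0.
Qed.

Lemma prim_expr_inj i j : (0 < i <= n)%N -> (0 < j <= n)%N ->
  (gamma ^+ i == gamma ^+ j) = (i == j).
Proof.
case: i => // i /andP[_ lt_in]; case: j => // j /andP[_ lt_jn].
rewrite (eq_prim_root_expr prim) -[i.+1]addn1 -[j.+1]addn1 eqn_modDr.
by rewrite !modn_small ?eqn_add2r.
Qed.

Lemma prim_expr_onto x : x != 0 -> exists2 j, (0 < j <= n)%N & x = gamma ^+ j.
Proof.
move=> x_neq0; have xn : x ^+ n = 1.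
  apply: (mulfI x_neq0); rewrite -exprS prednK ?expn_gt0 // -cardF expf_card.
  by rewrite mulr1.
have [i ->] := prim_rootP prim xn.
have n_gt0 := prim_order_gt0 prim.
case: (posnP i) => [i0|i_gt0]; last by exists i => //; rewrite i_gt0 ltnW.
by exists n; rewrite ?n_gt0 ?leqnn // i0 expr0 prim_expr_order.
Qed.

Lemma eps'E x : exists2 j : 'I_(2 ^ m), eps' m gamma x = delta_mx 0 j &
  x = if j == 0 :> nat then 0 else gamma ^+ j.
Proof.
have lt_n2m : (n < 2 ^ m)%N by rewrite prednK ?expn_gt0.
have [->|x_neq0] := eqVneq x 0.
  exists (Ordinal (expn_gt0 2 m)) => //; apply/rowP => -[[|k] lt_k2m].
    by rewrite !mxE -val_eqE /= eqxx.
  by rewrite !mxE -val_eqE /= eq_sym (negbTE (prim_expf_neq0 _)).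
have [j j_in ->] := prim_expr_onto x_neq0.
have [j_gt0 le_jn] := andP j_in.
exists (Ordinal (leq_ltn_trans le_jn lt_n2m)); last by rewrite /= eqn0Ngt j_gt0.
apply/rowP => -[[|k] lt_k2m]; rewrite !mxE -!(@val_eqE _ _ (ordinal _)) /=.
  by rewrite (negbTE (prim_expf_neq0 _)) eq_sym eqn0Ngt j_gt0.
by rewrite prim_expr_inj ?j_in 1?eq_sym //=; lia.
Qed.

Lemma parity_eps' x : parity (eps' m gamma x) = 1.
Proof. by have [j -> _] := eps'E x; rewrite parity_delta. Qed.

Lemma decode_eps' x : decode gamma (eps' m gamma x) = x.
Proof. by have [j -> ->] := eps'E x; rewrite decode_delta. Qed.

End PrimitiveRoot.

Section Syndrome.
Variables (F : finFieldType) (m : nat) (gamma : F) (b t : nat) (M : 'M[F]_b.+1).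
Hypotheses (cardF : #|F| = (2 ^ m)%N) (prim : (2 ^ m).-1.-primitive_root gamma).
Local Notation V := 'rV['F_2]_(t.+1 * (b.+1 * 2 ^ m)).

Definition decode_col (w : V) k : 'cV[F]_b.+1 :=
  \col_i decode gamma (block w k i).

Lemma decode_colD w1 w2 k :
  decode_col (w1 + w2) k = decode_col w1 k + decode_col w2 k.
Proof.
apply/colP => i; rewrite !mxE blockD decodeD //.
exact: card_finPcharP cardF _.
Qed.

Definition nonbase := {p : 'I_t.+1 * 'I_b.+1 | p != (ord0, ord0)}.

Definition syndrome (w : V) :
    {ffun nonbase -> 'F_2} * {ffun 'I_t -> 'cV[F]_b.+1} :=
  ([ffun p => parity (block w (val p).1 (val p).2) -
              parity (block w ord0 ord0)],
   [ffun k => decode_col w (lift ord0 k) -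
              M ^+ lift ord0 k *m decode_col w ord0]).

Lemma syndromeD : {morph syndrome : w1 w2 / w1 + w2}.
Proof.
move=> w1 w2; congr (_, _); apply/ffunP => p; rewrite !ffunE.
  by rewrite !blockD !parityD opprD addrACA.
by rewrite !decode_colD mulmxDr opprD addrACA.
Qed.

Lemma decode_col_alpha v k :
  decode_col (alpha m t.+1 gamma M v) k = M ^+ k *m v.
Proof. by apply/colP => i; rewrite mxE block_alpha decode_eps'. Qed.

Lemma syndrome_alpha v : syndrome (alpha m t.+1 gamma M v) = 0.
Proof.
congr (_, _); apply/ffunP => p; rewrite !ffunE.
  by rewrite !block_alpha !parity_eps' //; apply: subrr.
by rewrite !decode_col_alpha expr0 mul1mx subrr.
Qed.

Implicit Type x : {ffun nonbase -> 'F_2} * {ffun 'I_t -> 'cV[F]_b.+1}.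

(* eps' 0 *+ c has parity c and decodes to 0, eps' y + eps' 0 has parity 0
   and decodes to y. *)
Definition section_block x k i : 'rV['F_2]_(2 ^ m) :=
  eps' m gamma 0 *+ oapp x.1 0 (insub (k, i)) +
  eps' m gamma (oapp (fun k' => x.2 k' i 0) 0 (unlift ord0 k)) + eps' m gamma 0.

Definition syndrome_section x : V :=
  mxvec (\matrix_(k < t.+1) mxvec (\matrix_(i < b.+1) section_block x k i)).

Lemma parity_section_block x k i :
  parity (section_block x k i) = oapp x.1 0 (insub (k, i)).
Proof.
rewrite !parityD morphD_mulrn; last exact: parityD.
have one_add_one : 1 + 1 = 0 :> 'F_2 by apply: val_inj.
by rewrite !parity_eps' // natr_Zp -addrA one_add_one addr0.
Qed.

Lemma decode_section_block x k i :
  decode gamma (section_block x k i) =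
  oapp (fun k' => x.2 k' i 0) 0 (unlift ord0 k).
Proof.
have char2F : 2 \in [pchar F] by exact: card_finPcharP cardF _.
rewrite !decodeD // morphD_mulrn; last exact: decodeD.
by rewrite !decode_eps' // mul0rn add0r addr0.
Qed.

Lemma decode_col_section x k :
  decode_col (syndrome_section x) k = oapp x.2 0 (unlift ord0 k).
Proof.
apply/colP => i; rewrite mxE block_mxvec decode_section_block.
by case: unlift => [k'|] /=; rewrite ?mxE.
Qed.

Lemma syndrome_sectionK : cancel syndrome_section syndrome.
Proof.
move=> [f g]; congr (_, _); apply/ffunP => p; rewrite !ffunE.
  rewrite !block_mxvec !parity_section_block -surjective_pairing valK.
  by rewrite insubF ?eqxx //=; apply: subr0.
by rewrite !decode_col_section liftK unlift_none mulmx0 subr0.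
Qed.

End Syndrome.

Theorem mainTheorem9 (m b t : nat) (F : finFieldType) (gamma : F) (M : 'M[F]_b) :
  (1 <= m)%N -> (1 <= b)%N ->
  #|F| = (2 ^ m)%N ->
  (2 ^ m).-1.-primitive_root gamma ->
  M \in unitmx ->
  (0 < t)%N -> M ^+ t = 1%:M ->
  (forall k : nat, (0 < k < t)%N -> M ^+ k != 1%:M) ->
  (\dim <<[seq alpha m t gamma M v | v : 'cV[F]_b]>>%VS
     <= 2 ^ m * b * t - (b * t - 1) - m * b * (t - 1))%N.
Proof.
move=> _ b_gt0 cardF prim _ t_gt0 _ _.
case: t t_gt0 => // t _; case: b M b_gt0 => // b M _.
set U := <<_>>%VS.
have syn_span : forall u x, u \in [set u | u \in U] ->
    syndrome gamma M (u + syndrome_section m gamma x) = x.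
  move=> u x; rewrite inE => Uu.
  rewrite syndromeD // syndrome_sectionK //.
  rewrite (span_additive_eq0 (syndromeD gamma M cardF) _ Uu) ?add0r //.
  by move=> _ /mapP[v _ ->]; apply: syndrome_alpha.
have := leq_card_section syn_span.
rewrite cardsE card_vspace card_prod !card_ffun card_sig cardC1.
rewrite !card_mx !card_prod !card_Fp // !card_ord cardF.
rewrite -!expnM -!expnD leq_exp2l //.
move: (\dim U) => d; move: (2 ^ m)%N => q; nia.
Qed.
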